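(* Let $(V,d)$ have doubling dimension at most $\kappa$, and let $\Pi$ and the areas $A(j,r)$ be constructed as below. For every subset $\mathcal{C}\subseteq V$ of clients there exists $S\subseteq\Pi$ such that $\mathcal{C}\subseteq\bigcup\{A(j,r):\langle j,r\rangle\in S\}$ and $$\sum_{\langle j,r\rangle\in S}(f_j+7\cdot 5^r)=\mathcal{O}(2^{2\kappa}\cdot\mathrm{OPT}),$$ i.e. at most an absolute constant times $2^{2\kappa}\cdot\mathrm{OPT}$.
   Context: $(V,d)$ is a metric space of diameter $W$ whose doubling dimension is at most $\kappa$: every ball $B(x,\rho)=\{y\in V:d(x,y)\le\rho\}$ can be covered by $2^\kappa$ balls of radius $\rho/2$. $F\subseteq V$ is a finite set of facilities with opening costs $f_j>0$, $f_{\min}=\min_j f_j$. $\mathrm{OPT}$ is the minimum, over all finite collections of balls $B(j,R)$ with $j\in F$, $R\ge0$, whose union contains $\mathcal{C}$, of $\sum(f_j+R)$. Let $\rho_{\min}=\lfloor\log_5 f_{\min}\rfloor$, $\rho_{\max}=\lceil\log_5 W\rceil$. For each integer $r\in[\rho_{\min},\rho_{\max}]$, let $J'_r=\{j\in F:f_j\le 5^r\}$ and let $J_r$ be a maximal subset of $J'_r$ such that any two facilities of $J_r$ are at distance greater than $5^{r+1}$. $\Pi=\{\langle j,r\rangle:\rho_{\min}\le r\le\rho_{\max},\ j\in J_r\}$. The tree $\mathcal{T}$ on $\Pi$ has as root the unique pair with $r=\rho_{\max}$, and for $r<\rho_{\max}$, $\mathrm{parent}(j,r)=\langle j',r+1\rangle$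 where $j'$ is a facility of $J_{r+1}$ closest to $j$ (ties arbitrary). Areas: initialize $A(j,r)=\emptyset$; for each point $p\in V$ lying in some ball $B(j,7\cdot5^r)$ with $\langle j,r\rangle\in\Pi$, let $r^*$ be the minimum $r$ for which some $\langle j,r^*\rangle\in\Pi$ has $p\in B(j,7\cdot5^{r^*})$, let $\langle j^*,r^*\rangle$ be such a pair minimizing $d(p,j^* )$, and add $p$ to $A(j^*,r^* )$ and to $A(j',r')$ for every ancestor $\langle j',r'\rangle$ of $\langle j^*,r^*\rangle$ in $\mathcal{T}$. *)

From Stdlib Require Import Reals List ZArith.
Open Scope R_scope.

Section Defs.
Context {V : Type} (d : V -> V -> R).

Record metric : Prop := {
  d_nonneg : forall x y, 0 <= d x y;
  d_zero : forall x y, d x y = 0 <-> x = y;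
  d_sym : forall x y, d x y = d y x;
  d_tri : forall x y z, d x z <= d x y + d y z }.

Definition ball (x : V) (rho : R) (y : V) : Prop := d x y <= rho.

Definition doubling (kappa : R) : Prop :=
  forall (x : V) (rho : R), exists L : list V,
    INR (length L) <= Rpower 2 kappa /\
    forall y, ball x rho y -> exists c, In c L /\ ball c (rho / 2) y.

Definition is_diameter (W : R) : Prop :=
  is_lub (fun w => exists x y, w = d x y) W.

End Defs.

Definition Zfloor (x : R) : Z := (up x - 1)%Z.
Definition Zceil (x : R) : Z := (- Zfloor (- x))%Z.
Definition log5 (x : R) : R := ln x / ln 5.
Definition pow5 (r : Z) : R := powerRZ 5 r.

Definition f_min {V : Type} (F : list V) (f : V -> R) : R :=
  match F with
  | nil => 0
  | j :: l => fold_right (fun x m => Rmin (f x) m) (f j) l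
  end.

Definition rho_min {V : Type} (F : list V) (f : V -> R) : Z := Zfloor (log5 (f_min F f)).
Definition rho_max (W : R) : Z := Zceil (log5 W).

Section Construction.
Context {V : Type} (d : V -> V -> R) (F : list V) (f : V -> R)
  (rmin rmax : Z).

Definition Jprime (r : Z) (j : V) : Prop := In j F /\ f j <= pow5 r.

(** J r is a maximal subset of J'_r whose points are pairwise at distance > 5^(r+1),
    for every r in [rmin, rmax] *)
Definition valid_J (J : Z -> V -> Prop) : Prop :=
  forall r, (rmin <= r <= rmax)%Z ->
    (forall j, J r j -> Jprime r j) /\
    (forall j1 j2, J r j1 -> J r j2 -> j1 <> j2 -> pow5 (r + 1) < d j1 j2) /\
    (forall j, Jprime r j -> ~ J r j -> exists j', J r j' /\ d j j' <= pow5 (r + 1)).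

Definition inPi (J : Z -> V -> Prop) (x : V * Z) : Prop :=
  (rmin <= snd x <= rmax)%Z /\ J (snd x) (fst x).

(** parent(j,r) = <par j r, r+1>, with par j r a facility of J_{r+1} closest to j *)
Definition valid_parent (J : Z -> V -> Prop) (par : V -> Z -> V) : Prop :=
  forall j r, (rmin <= r < rmax)%Z -> J r j ->
    J (r + 1)%Z (par j r) /\ forall j', J (r + 1)%Z j' -> d j (par j r) <= d j j'.

Definition tree_step (par : V -> Z -> V) (x : V * Z) : V * Z :=
  (par (fst x) (snd x), (snd x + 1)%Z).

Definition covered (J : Z -> V -> Prop) (p : V) : Prop :=
  exists j r, inPi J (j, r) /\ ball d j (7 * pow5 r) p.

Definition valid_star (J : Z -> V -> Prop) (rs : V -> Z) (js : V -> V) : Prop :=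
  forall p, covered J p ->
    inPi J (js p, rs p) /\ ball d (js p) (7 * pow5 (rs p)) p /\
    (forall j r, inPi J (j, r) -> ball d j (7 * pow5 r) p -> (rs p <= r)%Z) /\
    (forall j, inPi J (j, rs p) -> ball d j (7 * pow5 (rs p)) p ->
       d (js p) p <= d j p).

Definition area (J : Z -> V -> Prop) (par : V -> Z -> V) (rs : V -> Z) (js : V -> V)
  (x : V * Z) (p : V) : Prop :=
  covered J p /\ exists n : nat, Nat.iter n (tree_step par) (js p, rs p) = x.

End Construction.

Section Opt.
Context {V : Type} (d : V -> V -> R) (F : list V) (f : V -> R).

Definition feasible_cover (C : V -> Prop) (L : list (V * R)) : Prop :=
  (forall b, In b L -> In (fst b) F /\ 0 <= snd b) /\
  (forall p, C p -> exists b, In b L /\ ball d (fst b) (snd b) p).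

Definition cover_cost (L : list (V * R)) : R :=
  fold_right (fun b acc => f (fst b) + snd b + acc) 0 L.

Definition is_OPT (C : V -> Prop) (opt : R) : Prop :=
  (forall L, feasible_cover C L -> opt <= cover_cost L) /\
  (forall b, (forall L, feasible_cover C L -> b <= cover_cost L) -> b <= opt).

Definition pi_cost (S : list (V * Z)) : R :=
  fold_right (fun x acc => f (fst x) + 7 * pow5 (snd x) + acc) 0 S.

End Opt.

From Pilot Require Import Defs.
From Stdlib Require Import Reals List ZArith Lra Lia ClassicalEpsilon Classical.
Open Scope R_scope.

(* Fix a cover L of C by balls B(j, R) of cost at most 2 OPT.  Give each ball the
   least level r with f_j + R <= 5^r (capped at the top level), so 5^r < 5 (f_j + R),
   and charge to it the facilities of J_r within 8 * 5^r of j.  Two rounds of the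
   doubling property cover B(j, 8 * 5^r) by 2^(2 kappa) balls of radius 2 * 5^r,
   each containing at most one point of the 5^(r+1)-separated set J_r; each charged
   pair costs at most 8 * 5^r, so a ball of L is charged at most
   40 * 2^(2 kappa) (f_j + R).  A client p in B(j, R) is assigned at a level at most
   r, and climbing the tree keeps p within 7 * 5^s of the level-s ancestor, so the
   ancestor at level r is within R + 7 * 5^r <= 8 * 5^r of j and is charged. *)

Lemma pow5_Rpower r : pow5 r = Rpower 5 (IZR r).
Proof. apply powerRZ_Rpower; lra. Qed.

Lemma pow5_pos r : 0 < pow5 r.
Proof. apply powerRZ_lt; lra. Qed.

Lemma pow5_succ r : pow5 (r + 1) = 5 * pow5 r.
Proof. unfold pow5; rewrite powerRZ_add by lra; simpl; lra. Qed.

Lemma pow5_le a b : (a <= b)%Z -> pow5 a <= pow5 b.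
Proof. intros H; rewrite !pow5_Rpower; apply Rle_Rpower; [lra | now apply IZR_le]. Qed.

Lemma pow5_le_inv a b : pow5 a <= pow5 b -> (a <= b)%Z.
Proof.
  intros H; destruct (Z_le_gt_dec a b) as [|Hba]; auto.
  assert (pow5 b < pow5 a) by (rewrite !pow5_Rpower; apply Rpower_lt; [lra | apply IZR_lt; lia]).
  lra.
Qed.

Lemma Rpower_log5 m : 0 < m -> Rpower 5 (log5 m) = m.
Proof. intros Hm; apply Rpower_Rlog; lra. Qed.

Lemma pow5_Zceil_log5 m : 0 < m -> m <= pow5 (Zceil (log5 m)) < 5 * m.
Proof.
  intros Hm; pose proof (Rpower_log5 m Hm) as Em.
  rewrite pow5_Rpower; set (y := log5 m) in *; rewrite <- Em.
  destruct (Zceil_bound y).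
  split; [apply Rle_Rpower; lra|].
  replace (5 * Rpower 5 y) with (Rpower 5 (1 + y)) by (rewrite Rpower_plus, Rpower_1; lra).
  apply Rpower_lt; lra.
Qed.

(* The Stdlib [Zfloor] and [Zceil] in scope shadow, and are convertible to, those of Defs. *)
Lemma pow5_rho_min_le {V} (F : list V) f : 0 < f_min F f -> pow5 (rho_min F f) <= f_min F f.
Proof.
  intros Hm; pose proof (Rpower_log5 _ Hm) as Em.
  rewrite pow5_Rpower; unfold rho_min; set (y := log5 (f_min F f)) in *; rewrite <- Em.
  apply Rle_Rpower; [lra | exact (proj1 (Zfloor_bound y))].
Qed.

Lemma pow5_rho_max_ge W : 0 < W -> W <= pow5 (rho_max W).
Proof. intros HW; exact (proj1 (pow5_Zceil_log5 W HW)). Qed.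

Definition cap_level (rmax : Z) (m : R) : Z := Z.min (Zceil (log5 m)) rmax.

Lemma cap_level_spec rmin rmax m :
  0 < m -> pow5 rmin <= m -> (rmin <= rmax)%Z ->
  (rmin <= cap_level rmax m <= rmax)%Z /\ pow5 (cap_level rmax m) < 5 * m /\
  (m <= pow5 (cap_level rmax m) \/ cap_level rmax m = rmax).
Proof.
  intros Hm Hmin Hr; unfold cap_level.
  destruct (pow5_Zceil_log5 m Hm) as [Hlo Hhi].
  assert (Hc : (rmin <= Zceil (log5 m))%Z) by (apply pow5_le_inv; lra).
  destruct (Z.min_spec (Zceil (log5 m)) rmax) as [[Hlt ->] | [Hle ->]].
  - split; [lia|]. split; [lra | now left].
  - pose proof (pow5_le _ _ Hle). split; [lia|]. split; [lra | now right].
Qed.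

Definition choose_one {A : Type} (P : A -> Prop) : list A :=
  match excluded_middle_informative (exists x, P x) with
  | left H => proj1_sig (constructive_indefinite_description P H) :: nil
  | right _ => nil
  end.

Lemma choose_one_length {A} (P : A -> Prop) : (length (choose_one P) <= 1)%nat.
Proof. unfold choose_one; destruct excluded_middle_informative; simpl; lia. Qed.

Lemma choose_one_sound {A} (P : A -> Prop) a : In a (choose_one P) -> P a.
Proof.
  unfold choose_one; destruct excluded_middle_informative as [H|]; simpl; [|tauto].
  intros [<- | []]; apply proj2_sig.
Qed.

Lemma choose_one_unique {A} (P : A -> Prop) a :
  P a -> (forall b, P b -> b = a) -> In a (choose_one P).
Proof.
  intros Ha Huniq; unfold choose_one.
  destruct excluded_middle_informative as [H | H]; [| exfalso; eauto].
  left; apply Huniq, proj2_sig.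
Qed.

Lemma length_flat_map_le {A B} (g : A -> list B) l K :
  (forall x, In x l -> INR (length (g x)) <= K) ->
  INR (length (flat_map g l)) <= INR (length l) * K.
Proof.
  induction l as [|x l IH]; intros Hg; cbn [flat_map length]; [simpl; lra|].
  rewrite length_app, plus_INR, S_INR.
  specialize (IH (fun y Hy => Hg y (or_intror Hy))). specialize (Hg x (or_introl eq_refl)). lra.
Qed.

Section Costs.
Context {V : Type} (f : V -> R).

Lemma pi_cost_app l1 l2 : pi_cost f (l1 ++ l2) = pi_cost f l1 + pi_cost f l2.
Proof. induction l1 as [|x l1 IH]; simpl; [lra|]. unfold pi_cost in *; rewrite IH; lra. Qed.

Lemma pi_cost_nodup dec (l : list (V * Z)) :
  (forall x, In x l -> 0 <= f (fst x)) -> pi_cost f (nodup dec l) <= pi_cost f l.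
Proof.
  induction l as [|x l IH]; intros Hf; simpl; [lra|].
  specialize (IH (fun y Hy => Hf y (or_intror Hy))). specialize (Hf x (or_introl eq_refl)).
  pose proof (pow5_pos (snd x)).
  destruct in_dec; unfold pi_cost in *; simpl; lra.
Qed.

Lemma pi_cost_at_level r l :
  (forall a, In a l -> f a <= pow5 r) ->
  pi_cost f (map (fun a => (a, r)) l) <= INR (length l) * (8 * pow5 r).
Proof.
  induction l as [|a l IH]; intros Hf; cbn [map length]; [simpl; lra|].
  specialize (IH (fun y Hy => Hf y (or_intror Hy))). specialize (Hf a (or_introl eq_refl)).
  rewrite S_INR; unfold pi_cost in *; simpl; lra.
Qed.

Lemma cover_cost_nonneg L :
  (forall b, In b L -> 0 <= f (fst b) + snd b) -> 0 <= cover_cost f L.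
Proof.
  induction L as [|b L IH]; intros Hb; simpl; [lra|].
  specialize (IH (fun y Hy => Hb y (or_intror Hy))). specialize (Hb b (or_introl eq_refl)).
  unfold cover_cost in *; lra.
Qed.

Lemma cover_cost_member_le L b :
  (forall b, In b L -> 0 <= f (fst b) + snd b) -> In b L ->
  f (fst b) + snd b <= cover_cost f L.
Proof.
  induction L as [|b' L IH]; intros Hb Hin; simpl in *; [tauto|].
  pose proof (cover_cost_nonneg L (fun y Hy => Hb y (or_intror Hy))).
  specialize (IH (fun y Hy => Hb y (or_intror Hy))). specialize (Hb b' (or_introl eq_refl)).
  unfold cover_cost in *; destruct Hin as [<- | Hin]; [lra|]. specialize (IH Hin); lra.
Qed.

Lemma pi_cost_flat_map_le (g : V * R -> list (V * Z)) L K :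
  (forall b, In b L -> pi_cost f (g b) <= K * (f (fst b) + snd b)) ->
  pi_cost f (flat_map g L) <= K * cover_cost f L.
Proof.
  induction L as [|b L IH]; intros Hg; simpl; [unfold pi_cost; simpl; lra|].
  rewrite pi_cost_app.
  specialize (IH (fun y Hy => Hg y (or_intror Hy))). specialize (Hg b (or_introl eq_refl)).
  unfold cover_cost in *; simpl; lra.
Qed.

End Costs.

Lemma f_min_le {V} (F : list V) f j : In j F -> f_min F f <= f j.
Proof.
  destruct F as [|a l]; simpl; [tauto|].
  enough (H : fold_right (fun x m => Rmin (f x) m) (f a) l <= f a /\
              forall x, In x l -> fold_right (fun x m => Rmin (f x) m) (f a) l <= f x)
    by (destruct H as [Ha Hl]; intros [<- | Hj]; auto).
  induction l as [|y l [IH1 IH2]]; simpl; [split; [lra | tauto]|].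
  pose proof (Rmin_l (f y) (fold_right (fun x m => Rmin (f x) m) (f a) l)).
  pose proof (Rmin_r (f y) (fold_right (fun x m => Rmin (f x) m) (f a) l)).
  split; [lra|]. intros x [<- | Hx]; [lra|]. specialize (IH2 x Hx); lra.
Qed.

Lemma f_min_pos {V} (F : list V) f :
  F <> nil -> (forall j, In j F -> 0 < f j) -> 0 < f_min F f.
Proof.
  destruct F as [|a l]; [tauto|]; intros _ Hf; simpl.
  assert (Ha : 0 < f a) by (apply Hf; left; auto).
  induction l as [|y l IH]; simpl; auto.
  apply Rmin_glb_lt; [apply Hf; simpl; auto|].
  apply IH; intros j [<- | Hj]; apply Hf; simpl; auto.
Qed.

Lemma near_optimal_cover {V} (d : V -> V -> R) F f C opt :
  F <> nil -> (forall j, In j F -> 0 < f j) -> is_OPT d F f C opt ->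
  exists L, feasible_cover d F C L /\ cover_cost f L <= 2 * opt.
Proof.
  intros HF Hf [_ Hglb].
  assert (Hnn : forall L, feasible_cover d F C L ->
                forall b, In b L -> 0 <= f (fst b) + snd b).
  { intros L [HL _] b Hb; destruct (HL b Hb) as [HbF Hr]; specialize (Hf _ HbF); lra. }
  destruct (classic (exists p, C p)) as [[p Hp] | HC].
  - assert (Hopt : f_min F f <= opt).
    { apply Hglb; intros L HL; pose proof HL as [HLF HLC].
      destruct (HLC p Hp) as [b [Hb _]].
      pose proof (cover_cost_member_le f L b (Hnn L HL) Hb).
      pose proof (f_min_le F f (fst b) (proj1 (HLF b Hb))).
      pose proof (proj2 (HLF b Hb)); lra. }
    pose proof (f_min_pos F f HF Hf).
    apply NNPP; intros Hno.
    enough (2 * opt <= opt) by lra.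
    apply Hglb; intros L HL; apply Rnot_lt_le; intros Hlt.
    apply Hno; exists L; split; [exact HL | lra].
  - exists nil; split; [split; [simpl; tauto | intros p Hp; exfalso; eauto]|].
    enough (0 <= opt) by (simpl; lra).
    apply Hglb; intros L HL; exact (cover_cost_nonneg f L (Hnn L HL)).
Qed.

Lemma doubling_cover_fun {V} (d : V -> V -> R) kappa :
  doubling d kappa ->
  exists dl : V -> R -> list V, forall x rho,
    INR (length (dl x rho)) <= Rpower 2 kappa /\
    forall y, ball d x rho y -> exists c, In c (dl x rho) /\ ball d c (rho / 2) y.
Proof.
  intros Hdb.
  exists (fun x rho => proj1_sig (constructive_indefinite_description _ (Hdb x rho))).
  intros x rho; exact (proj2_sig (constructive_indefinite_description _ (Hdb x rho))).
Qed.

Section NearNet.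
Context {V : Type} (d : V -> V -> R) (dl : V -> R -> list V) (K : R).
Hypothesis Hm : metric d.
Hypothesis dl_length : forall x rho, INR (length (dl x rho)) <= K.
Hypothesis dl_cover :
  forall x rho y, ball d x rho y -> exists c, In c (dl x rho) /\ ball d c (rho / 2) y.

Definition near_net (P : V -> Prop) (x : V) (rho : R) : list V :=
  flat_map (fun c => choose_one (fun a => P a /\ ball d c (rho / 4) a))
    (flat_map (fun c => dl c (rho / 2)) (dl x rho)).

Lemma near_net_length P x rho : INR (length (near_net P x rho)) <= K * K.
Proof.
  assert (HK : 0 <= K) by (eapply Rle_trans; [apply pos_INR | apply (dl_length x rho)]).
  unfold near_net; eapply Rle_trans; [apply length_flat_map_le with (K := 1)|].
  - intros c _; apply (le_INR _ 1), choose_one_length.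
  - rewrite Rmult_1_r; eapply Rle_trans; [apply length_flat_map_le with (K := K)|].
    + intros c _; apply dl_length.
    + apply Rmult_le_compat_r; auto.
Qed.

Lemma near_net_sound P x rho a : In a (near_net P x rho) -> P a.
Proof.
  unfold near_net; intros Ha; apply in_flat_map in Ha as [c [_ Hc]].
  apply (choose_one_sound _ _ Hc).
Qed.

Lemma near_net_complete (P : V -> Prop) x rho a :
  (forall a b, P a -> P b -> a <> b -> rho / 2 < d a b) ->
  P a -> ball d x rho a -> In a (near_net P x rho).
Proof.
  intros Hsep Ha Hxa; unfold ball in *.
  destruct (dl_cover x rho a Hxa) as [c1 [Hc1 Hd1]].
  destruct (dl_cover c1 (rho / 2) a Hd1) as [c2 [Hc2 Hd2]].
  unfold near_net; apply in_flat_map; exists c2; split.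
  - apply in_flat_map; exists c1; auto.
  - apply choose_one_unique; [split; unfold ball in *; auto; lra|].
    intros b [Hb Hdb]; apply NNPP; intros Hne; unfold ball in *.
    pose proof (Hsep b a Hb Ha Hne); pose proof (d_tri d Hm b c2 a).
    rewrite (d_sym d Hm b c2) in *; lra.
Qed.

End NearNet.

Section Hierarchy.
Context {V : Type} (d : V -> V -> R) (F : list V) (f : V -> R) (rmin rmax : Z)
  (J : Z -> V -> Prop) (par : V -> Z -> V).
Hypotheses (Hm : metric d) (HJ : valid_J d F f rmin rmax J)
  (Hpar : valid_parent d rmin rmax J par).

Lemma valid_J_near r j :
  (rmin <= r <= rmax)%Z -> Jprime F f r j -> exists j', J r j' /\ d j j' <= pow5 (r + 1).
Proof.
  intros Hr Hj; destruct (HJ r Hr) as [_ [_ Hmax]].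
  destruct (classic (J r j)) as [Hin | Hout]; [|now apply Hmax].
  exists j; split; auto.
  rewrite (proj2 (d_zero d Hm j j) eq_refl); left; apply pow5_pos.
Qed.

(* A facility of J_r is in J'_{r+1}, so it lies within 5^(r+2) of J_{r+1}. *)
Lemma parent_dist r j :
  (rmin <= r < rmax)%Z -> J r j -> d j (par j r) <= 25 * pow5 r.
Proof.
  intros Hr Hj.
  destruct (proj1 (HJ r ltac:(lia)) j Hj) as [HjF Hfj].
  assert (Hj' : Jprime F f (r + 1) j).
  { split; auto; rewrite pow5_succ; pose proof (pow5_pos r); lra. }
  destruct (valid_J_near (r + 1) j ltac:(lia) Hj') as [j' [HJj' Hdj']].
  pose proof (proj2 (Hpar j r Hr Hj) j' HJj').
  rewrite !pow5_succ in Hdj'; lra.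
Qed.

(* 7 * 5^s + 25 * 5^s <= 7 * 5^(s+1) keeps p within 7 * 5^s of the level-s ancestor. *)
Lemma ancestor_iter n j k p :
  (rmin <= k)%Z -> (k + Z.of_nat n <= rmax)%Z -> J k j -> d j p <= 7 * pow5 k ->
  exists a, Nat.iter n (tree_step par) (j, k) = (a, (k + Z.of_nat n)%Z) /\
            J (k + Z.of_nat n) a /\ d a p <= 7 * pow5 (k + Z.of_nat n).
Proof.
  intros Hk; induction n as [|n IH]; intros Hn Hj Hjp.
  - exists j; rewrite Z.add_0_r; auto.
  - destruct (IH ltac:(lia) Hj Hjp) as [a [Ea [Ha Hap]]].
    set (s := (k + Z.of_nat n)%Z) in *.
    replace (k + Z.of_nat (S n))%Z with (s + 1)%Z by (unfold s; lia).
    exists (par a s); split; [simpl; rewrite Ea; reflexivity|].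
    assert (Hs : (rmin <= s < rmax)%Z) by (unfold s; lia).
    split; [apply (Hpar a s Hs Ha)|].
    pose proof (parent_dist s a Hs Ha); pose proof (d_tri d Hm (par a s) a p).
    rewrite (d_sym d Hm (par a s) a) in *; rewrite pow5_succ; pose proof (pow5_pos s); lra.
Qed.

Lemma ancestor_at_level k r j p :
  (rmin <= k <= r)%Z -> (r <= rmax)%Z -> J k j -> d j p <= 7 * pow5 k ->
  exists n a, Nat.iter n (tree_step par) (j, k) = (a, r) /\ J r a /\ d a p <= 7 * pow5 r.
Proof.
  intros Hk Hr Hj Hjp.
  destruct (ancestor_iter (Z.to_nat (r - k)) j k p ltac:(lia) ltac:(lia) Hj Hjp) as [a Ha].
  replace (k + Z.of_nat (Z.to_nat (r - k)))%Z with r in Ha by lia.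
  exists (Z.to_nat (r - k)), a; exact Ha.
Qed.

End Hierarchy.

Section BallNets.
Context {V : Type} (d : V -> V -> R) (F : list V) (f : V -> R) (rmin rmax : Z)
  (J : Z -> V -> Prop) (par : V -> Z -> V) (rs : V -> Z) (js : V -> V)
  (dl : V -> R -> list V) (K : R).
Hypotheses (Hm : metric d) (HJ : valid_J d F f rmin rmax J)
  (Hpar : valid_parent d rmin rmax J par) (Hstar : valid_star d rmin rmax J rs js).
Hypothesis dl_length : forall x rho, INR (length (dl x rho)) <= K.
Hypothesis dl_cover :
  forall x rho y, ball d x rho y -> exists c, In c (dl x rho) /\ ball d c (rho / 2) y.
Hypotheses (Hf_pos : forall j, In j F -> 0 < f j)
  (Hf_min : forall j, In j F -> pow5 rmin <= f j)
  (Hlevels : (rmin <= rmax)%Z) (Hroot : exists j, J rmax j)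
  (Hdiam : forall x y, d x y <= pow5 rmax).

Let level (j : V) (rad : R) : Z := cap_level rmax (f j + rad).

Definition ball_net (j : V) (rad : R) : list (V * Z) :=
  map (fun a => (a, level j rad)) (near_net d dl (J (level j rad)) j (8 * pow5 (level j rad))).

Lemma level_spec j rad : In j F -> 0 <= rad ->
  (rmin <= level j rad <= rmax)%Z /\ pow5 (level j rad) < 5 * (f j + rad) /\
  (f j + rad <= pow5 (level j rad) \/ level j rad = rmax).
Proof.
  intros Hj Hrad; pose proof (Hf_pos j Hj); pose proof (Hf_min j Hj).
  apply cap_level_spec; auto; lra.
Qed.

Lemma all_covered p : covered d rmin rmax J p.
Proof.
  destruct Hroot as [j Hj]; exists j, rmax; split; [split; simpl; auto; lia|].
  unfold ball; pose proof (Hdiam j p); pose proof (pow5_pos rmax); lra.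
Qed.

Lemma ball_net_inPi j rad x : In j F -> 0 <= rad -> In x (ball_net j rad) -> inPi rmin rmax J x.
Proof.
  intros Hj Hrad Hx; apply in_map_iff in Hx as [a [<- Ha]].
  split; [apply level_spec; auto | apply (near_net_sound _ _ _ _ _ _ Ha)].
Qed.

Lemma ball_net_cost j rad : In j F -> 0 <= rad ->
  pi_cost f (ball_net j rad) <= 40 * (K * K) * (f j + rad).
Proof.
  intros Hj Hrad; destruct (level_spec j rad Hj Hrad) as [Hr [Hr5 _]].
  unfold ball_net; set (r := level j rad) in *.
  eapply Rle_trans; [apply pi_cost_at_level|].
  - intros a Ha; apply (proj1 (HJ r Hr) a (near_net_sound _ _ _ _ _ _ Ha)).
  - pose proof (pow5_pos r); pose proof (near_net_length d dl K dl_length (J r) j (8 * pow5 r)).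
    assert (HK : 0 <= K * K) by (eapply Rle_trans; [apply pos_INR | eauto]).
    apply Rle_trans with (K * K * (8 * pow5 r)); [apply Rmult_le_compat_r; lra|].
    replace (40 * (K * K) * (f j + rad)) with (K * K * (40 * (f j + rad))) by ring.
    apply Rmult_le_compat_l; lra.
Qed.

(* Either j is within 5^(r+1) of J_r, so p is in a ball of level r, or r is the top level. *)
Lemma star_level_le j rad p :
  In j F -> 0 <= rad -> ball d j rad p -> (rs p <= level j rad)%Z.
Proof.
  intros Hj Hrad Hp; pose proof (Hf_pos j Hj).
  destruct (level_spec j rad Hj Hrad) as [Hr [_ [Hfit | Htop]]].
  - destruct (valid_J_near d F f rmin rmax J Hm HJ (level j rad) j Hr)
      as [j' [HJj' Hjj']]; [split; auto; lra|].
    apply (proj1 (proj2 (proj2 (Hstar p (all_covered p)))) j'); [split; auto|].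
    unfold ball in *; rewrite pow5_succ in Hjj'.
    pose proof (d_tri d Hm j' j p); rewrite (d_sym d Hm j' j) in *; lra.
  - rewrite Htop; apply (proj1 (Hstar p (all_covered p))).
Qed.

Lemma ball_net_covers j rad p : In j F -> 0 <= rad -> ball d j rad p ->
  exists x, In x (ball_net j rad) /\ area d rmin rmax J par rs js x p.
Proof.
  intros Hj Hrad Hp; pose proof (Hf_pos j Hj).
  destruct (level_spec j rad Hj Hrad) as [Hr [_ Hfit]].
  unfold ball_net; set (r := level j rad) in *.
  destruct (Hstar p (all_covered p)) as [[Hrs HJs] [Hball _]]; simpl in Hrs, HJs.
  destruct (ancestor_at_level d F f rmin rmax J par Hm HJ Hpar (rs p) r (js p) p)
    as [n [a [Ea [Ha Hap]]]]; auto.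
  { split; [lia | apply star_level_le; auto]. }
  { lia. }
  exists (a, r); split; [| split; [apply all_covered | exists n; exact Ea]].
  apply in_map_iff; exists a; split; auto.
  apply (near_net_complete d dl Hm dl_cover); auto.
  - intros b c Hb Hc Hne; pose proof (proj1 (proj2 (HJ r Hr)) b c Hb Hc Hne).
    rewrite pow5_succ in *; pose proof (pow5_pos r); lra.
  - unfold ball in *; pose proof (pow5_pos r).
    destruct Hfit as [Hfit | Htop].
    + pose proof (d_tri d Hm j p a); rewrite (d_sym d Hm p a) in *; lra.
    + rewrite Htop in *; pose proof (Hdiam j a); lra.
Qed.

Definition cover_net (L : list (V * R)) : list (V * Z) :=
  nodup (fun x y => excluded_middle_informative (x = y))
    (flat_map (fun b => ball_net (fst b) (snd b)) L).

Lemma cover_net_spec C L : feasible_cover d F C L ->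
  NoDup (cover_net L) /\
  (forall x, In x (cover_net L) -> inPi rmin rmax J x) /\
  (forall p, C p -> exists x, In x (cover_net L) /\ area d rmin rmax J par rs js x p) /\
  pi_cost f (cover_net L) <= 40 * (K * K) * cover_cost f L.
Proof.
  intros [HLF HLC].
  assert (HinPi : forall x, In x (cover_net L) -> inPi rmin rmax J x).
  { intros x Hx; apply nodup_In, in_flat_map in Hx as [b [Hb Hx]].
    destruct (HLF b Hb); eapply ball_net_inPi; eauto. }
  split; [apply NoDup_nodup|]; split; [exact HinPi|]; split.
  - intros p Hp; destruct (HLC p Hp) as [b [Hb Hpb]]; destruct (HLF b Hb).
    destruct (ball_net_covers (fst b) (snd b) p) as [x [Hx Harea]]; auto.
    exists x; split; auto; apply nodup_In, in_flat_map; eauto.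
  - eapply Rle_trans; [apply pi_cost_nodup|].
    + intros x Hx; destruct (HinPi x (proj2 (nodup_In _ _ x) Hx)) as [Hr Hx'].
      apply Rlt_le, Hf_pos, (proj1 (HJ _ Hr) _ Hx').
    + apply pi_cost_flat_map_le; intros b Hb; destruct (HLF b Hb).
      apply ball_net_cost; auto.
Qed.

End BallNets.

Theorem lemma6 :
  exists c : R, 0 < c /\
  forall (V : Type) (d : V -> V -> R) (kappa W : R) (F : list V) (f : V -> R)
    (J : Z -> V -> Prop) (par : V -> Z -> V) (rs : V -> Z) (js : V -> V)
    (C : V -> Prop) (opt : R),
    metric d ->
    doubling d kappa ->
    is_diameter d W -> 0 < W ->
    (forall j, In j F -> 0 < f j) ->
    (exists j, In j F /\ f j <= pow5 (rho_max W)) ->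
    valid_J d F f (rho_min F f) (rho_max W) J ->
    valid_parent d (rho_min F f) (rho_max W) J par ->
    valid_star d (rho_min F f) (rho_max W) J rs js ->
    is_OPT d F f C opt ->
    exists S : list (V * Z),
      NoDup S /\
      (forall x, In x S -> inPi (rho_min F f) (rho_max W) J x) /\
      (forall p, C p -> exists x, In x S /\
          area d (rho_min F f) (rho_max W) J par rs js x p) /\
      pi_cost f S <= c * Rpower 2 (2 * kappa) * opt.
Proof.
  exists 80; split; [lra|].
  intros V d kappa W F f J par rs js C opt Hm Hdb Hdiam HW Hf [j0 [Hj0 Hj0f]] HJ Hpar Hstar HOPT.
  assert (HF : F <> nil) by (intros ->; destruct Hj0).
  assert (Hf_min : forall j, In j F -> pow5 (rho_min F f) <= f j).
  { intros j Hj; pose proof (f_min_le F f j Hj).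
    pose proof (pow5_rho_min_le F f (f_min_pos F f HF Hf)); lra. }
  assert (Hlevels : (rho_min F f <= rho_max W)%Z).
  { apply pow5_le_inv; specialize (Hf_min j0 Hj0); lra. }
  assert (Hroot : exists j, J (rho_max W) j).
  { assert (Hj0' : Jprime F f (rho_max W) j0) by (split; auto).
    destruct (valid_J_near d F f _ _ J Hm HJ (rho_max W) j0 ltac:(lia) Hj0') as [j [Hj _]].
    eauto. }
  assert (Hd_max : forall x y, d x y <= pow5 (rho_max W)).
  { intros x y; pose proof (proj1 Hdiam (d x y) (ex_intro _ x (ex_intro _ y eq_refl))).
    pose proof (pow5_rho_max_ge W HW); lra. }
  destruct (doubling_cover_fun d kappa Hdb) as [dl Hdl].
  destruct (near_optimal_cover d F f C opt HF Hf HOPT) as [L [HL HLcost]].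
  destruct (cover_net_spec d F f _ _ J par rs js dl (Rpower 2 kappa) Hm HJ Hpar Hstar
      (fun x rho => proj1 (Hdl x rho)) (fun x rho => proj2 (Hdl x rho))
      Hf Hf_min Hlevels Hroot Hd_max C L HL)
    as [Hnodup [HinPi [Hcover Hcost]]].
  eexists; split; [exact Hnodup|]; split; [exact HinPi|]; split; [exact Hcover|].
  assert (HK : 0 <= Rpower 2 kappa * Rpower 2 kappa) by (apply Rmult_le_pos; left; apply exp_pos).
  replace (Rpower 2 (2 * kappa)) with (Rpower 2 kappa * Rpower 2 kappa)
    by (rewrite <- Rpower_plus; f_equal; ring).
  eapply Rle_trans; [exact Hcost|].
  replace (80 * (Rpower 2 kappa * Rpower 2 kappa) * opt)
    with (40 * (Rpower 2 kappa * Rpower 2 kappa) * (2 * opt)) by ring.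
  apply Rmult_le_compat_l; lra.
Qed.
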